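(* Let $p>1$, $1/p+1/q=1$, let $\{(x_i,y_i)\}_{i=1}^n\subset\mathbb{R}^d\times\{\pm1\}$ be linearly separable with $\max_i\|x_i\|_q<C$, and let $L(w)=\frac1n\sum_i\ell(y_i\langle w,x_i\rangle)$ with $\ell$ decreasing, convex, not attaining its minimum, $\inf\ell=0$. If the regularized direction $\bar w^{\mathrm{reg}}_p$ exists, then for every $\alpha>0$ there exists $r_\alpha$ such that for every $w\in\mathbb{R}^d$ with $\|w\|_p>r_\alpha$, $$L\big((1+\alpha)\|w\|_p\,\bar w^{\mathrm{reg}}_p\big)\le L(w).$$
   Context: The regularization path is $\bar w_p(B)=\arg\min_{\|w\|_p\le B}L(w)$ for $B>0$; if $\lim_{B\to\infty}\bar w_p(B)/B$ exists it is called the regularized direction $\bar w^{\mathrm{reg}}_p$. *)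

From HB Require Import structures.
From mathcomp Require Import all_boot all_order all_algebra.
From mathcomp Require Import all_classical all_reals all_analysis.
Set Implicit Arguments. Unset Strict Implicit. Unset Printing Implicit Defensive.
Import Order.TTheory GRing.Theory Num.Theory.
Import numFieldNormedType.Exports.
Local Open Scope ring_scope.
Local Open Scope classical_set_scope.

Definition pnorm (R : realType) (d : nat) (p : R) (w : 'rV[R]_d) : R :=
  (\sum_(i < d) `|w 0 i| `^ p) `^ (p^-1).

Definition dotp (R : realType) (d : nat) (w x : 'rV[R]_d) : R :=
  \sum_(i < d) w 0 i * x 0 i.

Definition emp_loss (R : realType) (d n : nat) (l : R -> R)
    (x : 'I_n -> 'rV[R]_d) (y : 'I_n -> R) (w : 'rV[R]_d) : R :=
  n%:R^-1 * \sum_(i < n) l (y i * dotp w (x i)).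

Definition is_reg_path_point (R : realType) (d : nat) (p : R)
    (L : 'rV[R]_d -> R) (B : R) (wB : 'rV[R]_d) : Prop :=
  pnorm p wB <= B /\ forall w, pnorm p w <= B -> L wB <= L w.

Definition is_reg_path (R : realType) (d : nat) (p : R)
    (L : 'rV[R]_d -> R) (wbar : R -> 'rV[R]_d) : Prop :=
  forall B : R, 0 < B -> is_reg_path_point p L B (wbar B).

Definition is_reg_direction (R : realType) (d : nat) (wbar : R -> 'rV[R]_d)
    (u : 'rV[R]_d) : Prop :=
  (fun B : R => B^-1 *: wbar B) @ +oo --> u.

Definition linearly_separable (R : realType) (d n : nat)
    (x : 'I_n -> 'rV[R]_d) (y : 'I_n -> R) : Prop :=
  exists w : 'rV[R]_d, forall i, 0 < y i * dotp w (x i).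

Definition convex_fun (R : realType) (l : R -> R) : Prop :=
  forall (a b t : R), 0 <= t <= 1 ->
    l (t * a + (1 - t) * b) <= t * l a + (1 - t) * l b.

From HB Require Import structures.
From mathcomp Require Import all_boot all_order all_algebra.
From mathcomp Require Import all_classical all_reals all_analysis.
From mathcomp Require Import ring lra.
Import Order.TTheory GRing.Theory Num.Theory.
Import numFieldNormedType.Exports.
Set Implicit Arguments. Unset Strict Implicit. Unset Printing Implicit Defensive.
Local Open Scope ring_scope.
Local Open Scope classical_set_scope.

(* Since the loss is nonincreasing in every margin y_i <w, x_i>, it suffices that for
   large B every margin of wbar B is at most (1 + alpha) B times the corresponding
   margin of u: then L((1 + alpha) |w|_p u) <= L(wbar |w|_p) <= L(w).  As wbar B / B
   tends to u, this holds once u has a positive margin on every sample.  If some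
   margin of u were <= 0, mixing a small multiple t B wh of a separating direction
   (|wh|_p <= 1) into wbar B keeps the point in the ball, raises that sample's margin
   from at most eps B by at least 2^(n+1) eps B, and by convexity of the loss costs
   each other sample at most l(kap B) - l(2 kap B).  Optimality of wbar B would give
   l(eps B) - l(2^(n+1) eps B) <= n (l(kap B) - l(2 kap B)) for all large B, which is
   impossible for a decreasing loss with infimum 0. *)

Lemma sumr_ge_sub_card (R : realDomainType) (I : finType) (f : I -> R) (X Y : R)
    (i0 : I) :
  0 <= X -> (forall i, - X <= f i) -> Y <= f i0 -> Y - #|I|%:R * X <= \sum_i f i.
Proof.
move=> X0 fX fY.
have -> : \sum_i f i = \sum_i (f i + X) - #|I|%:R * X.
  by rewrite big_split /= sumr_const mulr_natl addrK.
have : f i0 + X <= \sum_i (f i + X).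
  by rewrite (bigD1 i0) //= lerDl sumr_ge0 // => i _; rewrite -lerBlDr sub0r.
lra.
Qed.

Lemma finite_pos_lower_bound (R : realFieldType) (I : finType) (f : I -> R) :
  exists2 c, 0 < c & forall i, 0 < f i -> c <= f i.
Proof.
pose s := \sum_i (if 0 < f i then (f i)^-1 else 0).
have s_term i : 0 <= (if 0 < f i then (f i)^-1 else 0).
  by case: ifP => // /ltW; rewrite invr_ge0.
have s0 : 0 <= s by exact: sumr_ge0.
exists (1 + s)^-1; first by rewrite invr_gt0; lra.
move=> i fi; have : (f i)^-1 <= 1 + s.
  by rewrite /s (bigD1 i) //= fi addrCA lerDl addr_ge0 // sumr_ge0.
by rewrite -(invrK (f i)) lef_pV2 ?posrE ?invr_gt0 //; lra.
Qed.

Lemma exists_exp2_ge (R : archiFieldType) (a c : R) : 0 < c -> exists k, a <= c * 2 ^+ k.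
Proof.
move=> c_gt0; exists (Num.truncn (a / c)).+1.
rewrite -ler_pdivrMl // mulrC; apply/ltW; apply: lt_le_trans (truncnS_gt _) _.
by rewrite -natrX ler_nat ltnW // ltn_expl.
Qed.

Lemma dyadic_telescope (R : comNzRingType) (V : zmodType) (f : R -> V) (e B : R) n :
  \sum_(0 <= j < n) f (e * 2 ^+ j * B) - \sum_(0 <= j < n) f (e * 2 ^+ j * (2 * B)) =
  f (e * B) - f (e * 2 ^+ n * B).
Proof.
have -> : \sum_(0 <= j < n) f (e * 2 ^+ j * (2 * B)) =
    \sum_(0 <= j < n) f (e * 2 ^+ j.+1 * B).
  by apply: eq_bigr => j _; rewrite exprS; congr f; ring.
have := telescope_sumr (fun j => f (e * 2 ^+ j * B)) (leq0n n).
rewrite /= expr0 mulr1 -sumrB => tele.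
by rewrite -[RHS]opprB -tele -sumrN; apply: eq_bigr => j _; rewrite opprB.
Qed.

Section Loss.
Variables (R : realType) (l : R -> R).
Hypothesis l_decr : forall a b, a < b -> l b < l a.
Hypothesis l_convex : convex_fun l.
Hypothesis l_ge0 : forall a, 0 <= l a.
Hypothesis l_inf0 : forall e, 0 < e -> exists a, l a < e.

Lemma loss_nonincr {a b} : a <= b -> l b <= l a.
Proof. by rewrite le_eqVlt => /predU1P[->|/l_decr/ltW]. Qed.

Lemma loss_gt0 a : 0 < l a.
Proof. by apply: le_lt_trans (l_ge0 (a + 1)) _; apply: l_decr; rewrite ltrDl. Qed.

Lemma loss_increment_le {a b h} : a <= b -> 0 <= h ->
  l (a + h) + l b <= l a + l (b + h).
Proof.
move=> ab h0; have [->|h_gt0] := eqVneq h 0; first by rewrite !addr0 addrC.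
have {h_gt0} h_gt0 : 0 < h by rewrite lt_neqAle eq_sym h_gt0.
(* a + h and b are the convex combinations of a and b + h with weights t and 1 - t *)
pose t := (b - a) / (b - a + h).
have t01 : 0 <= t <= 1.
  by rewrite divr_ge0 ?ler_pdivrMr ?mul1r /=; lra.
have t'01 : 0 <= 1 - t <= 1 by lra.
have := @l_convex a (b + h) t t01; have := @l_convex a (b + h) (1 - t) t'01.
have -> : t * a + (1 - t) * (b + h) = a + h by rewrite /t; field; lra.
have -> : (1 - t) * a + (1 - (1 - t)) * (b + h) = b by rewrite /t; field; lra.
lra.
Qed.

Lemma loss_gain_ge M s a h : 0 <= a -> 0 <= h -> M <= a -> M + h <= s ->
  l a - l h <= l M - l s.
Proof.
move=> a0 h0 Ma Mhs.
have := loss_increment_le Ma h0.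
have := loss_nonincr Mhs.
have : l (a + h) <= l h by apply: loss_nonincr; rewrite lerDr.
lra.
Qed.

Lemma loss_cost_le M s h : 0 <= h -> 2 * h <= M -> M - h <= s ->
  l s - l M <= l h - l (2 * h).
Proof.
move=> h0 hM Mhs.
have hMh : h <= M - h by lra.
have := loss_increment_le hMh h0.
rewrite subrK (_ : h + h = 2 * h); last by ring.
have := loss_nonincr Mhs.
lra.
Qed.

Lemma loss_drop_not_dominated n e kap : 0 < e -> e * 2 ^+ n.+1 <= kap ->
  ~ (\forall B \near +oo,
       l (e * B) - l (e * 2 ^+ n.+1 * B) <= n%:R * (l (kap * B) - l (2 * kap * B))).
Proof.
move=> e_gt0 e_kap [B0 [_ dominated]].
(* G B - G (2 B) telescopes to the left-hand side, so the domination makes Phi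
   nondecreasing along c, 2 c, 4 c, ...; yet Phi c >= l (kap c) > 0 while
   Phi B <= (n + 1) l (e B) tends to 0. *)
pose G B := \sum_(0 <= j < n.+1) l (e * 2 ^+ j * B).
pose Phi B := G B - n%:R * l (kap * B).
pose c := Num.max (B0 + 1) 1.
have c_gt0 : 0 < c by rewrite lt_max ltr01 orbT.
have c_gtB0 : B0 < c by rewrite lt_max ltrDl ltr01.
have Phi_mono k : Phi c <= Phi (c * 2 ^+ k).
  elim: k => [|k IH]; first by rewrite expr0 mulr1.
  apply: le_trans IH _.
  have B_gtB0 : B0 < c * 2 ^+ k.
    apply: lt_le_trans c_gtB0 _; rewrite ler_peMr ?(ltW c_gt0) //.
    by apply: exprn_ege1; rewrite ler1n.
  have := dominated _ B_gtB0; rewrite -(dyadic_telescope l e (c * 2 ^+ k) n.+1).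
  rewrite /Phi /G (_ : c * 2 ^+ k.+1 = 2 * (c * 2 ^+ k)); last by rewrite exprS; ring.
  rewrite (_ : kap * (2 * _) = 2 * kap * (c * 2 ^+ k)); last by ring.
  lra.
have Phi_lb : l (kap * c) <= Phi c.
  suff : n.+1%:R * l (kap * c) <= G c by rewrite /Phi -natr1; lra.
  rewrite mulr_natl -[n.+1]subn0 -sumr_const_nat.
  apply: ler_sum_nat => j /andP[_ /ltnW jn].
  apply: loss_nonincr; rewrite ler_pM2r //; apply: le_trans e_kap.
  by rewrite ler_pM2l // ler_eXn2l ?ltr1n.
have Phi_ub B : 0 <= B -> Phi B <= n.+1%:R * l (e * B).
  move=> B_ge0; have : G B <= n.+1%:R * l (e * B).
    rewrite mulr_natl -[n.+1]subn0 -sumr_const_nat; apply: ler_sum_nat => j _.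
    apply: loss_nonincr; rewrite -mulrA ler_pM2l // ler_peMl //.
    by apply: exprn_ege1; rewrite ler1n.
  have : 0 <= n%:R * l (kap * B) by rewrite mulr_ge0.
  rewrite /Phi; lra.
have [a la] := l_inf0 (divr_gt0 (loss_gt0 (kap * c)) (ltr0Sn R n)).
have [k a_le] := exists_exp2_ge a (mulr_gt0 e_gt0 c_gt0).
have ck_ge0 : 0 <= c * 2 ^+ k by rewrite mulr_ge0 ?exprn_ge0 // ltW.
have := le_trans Phi_lb (le_trans (Phi_mono k) (Phi_ub _ ck_ge0)).
have : n.+1%:R * l (e * (c * 2 ^+ k)) <= n.+1%:R * l a.
  by rewrite ler_pM2l ?ltr0Sn //; apply: loss_nonincr; rewrite mulrA.
rewrite ltr_pdivlMr ?ltr0Sn // mulrC in la.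
lra.
Qed.

End Loss.

Section PNorm.
Variables (R : realType) (d : nat) (p : R).
Hypothesis p_ge1 : 1 <= p.
Implicit Types (a b w : 'rV[R]_d).

Let p_gt0 : 0 < p. Proof. exact: lt_le_trans ltr01 p_ge1. Qed.

Lemma pnorm_ge0 w : 0 <= pnorm p w.
Proof. exact: powR_ge0. Qed.

Lemma powR_pnorm w : pnorm p w `^ p = \sum_(j < d) `|w 0 j| `^ p.
Proof.
by rewrite -powRrM mulVf ?gt_eqF // powRr1 // sumr_ge0 // => j _; exact: powR_ge0.
Qed.

Lemma pnorm_le w B : 0 <= B ->
  (pnorm p w <= B) = (\sum_(j < d) `|w 0 j| `^ p <= B `^ p).
Proof.
move=> B0; rewrite -powR_pnorm.
apply/idP/idP => [|le_pow].
  by apply: ge0_ler_powR; rewrite ?nnegrE ?pnorm_ge0 // ltW.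
rewrite -[pnorm p w]powRr1 ?pnorm_ge0 // -[B]powRr1 // -(@mulfV _ p) ?gt_eqF // !powRrM.
by apply: ge0_ler_powR; rewrite ?nnegrE ?invr_ge0 ?powR_ge0 // ltW.
Qed.

Lemma pnormZ c w : pnorm p (c *: w) = `|c| * pnorm p w.
Proof.
rewrite /pnorm (eq_bigr (fun j => `|c| `^ p * `|w 0 j| `^ p)); last first.
  by move=> j _; rewrite mxE normrM powRM.
have sum_ge0 : 0 <= \sum_(j < d) `|w 0 j| `^ p by apply: sumr_ge0 => j _; apply: powR_ge0.
by rewrite -mulr_sumr powRM ?powR_ge0 // -powRrM mulfV ?gt_eqF // powRr1.
Qed.

Lemma pnorm_ball_convex B a b t : 0 <= t <= 1 ->
  pnorm p a <= B -> pnorm p b <= B -> pnorm p (t *: a + (1 - t) *: b) <= B.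
Proof.
move=> /andP[t0 t1] aB bB; have B0 : 0 <= B := le_trans (pnorm_ge0 a) aB.
rewrite (pnorm_le a B0) in aB; rewrite (pnorm_le b B0) in bB; rewrite pnorm_le //.
apply: le_trans (_ : t * (\sum_j `|a 0 j| `^ p) + (1 - t) * (\sum_j `|b 0 j| `^ p) <= _).
  rewrite !mulr_sumr -big_split /=; apply: ler_sum => j _; rewrite !mxE.
  have nneg (z : R) : `|z| \in (`[0, +oo[%classic : set R).
    by rewrite inE /= in_itv /= andbT.
  have := convex_powR p_ge1 (Itv01 t0 t1) (nneg (a 0 j)) (nneg (b 0 j)).
  rewrite /= !convRE; apply: le_trans.
  apply: (ge0_ler_powR (ltW p_gt0)); rewrite ?nnegrE ?convRE //.
    by rewrite addr_ge0 // mulr_ge0 // subr_ge0.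
  apply: le_trans (ler_normD _ _) _.
  by rewrite !normrM (ger0_norm t0) (@ger0_norm _ (1 - t)) // subr_ge0.
have t'0 : 0 <= 1 - t by rewrite subr_ge0.
apply: le_trans (lerD (ler_wpM2l t0 aB) (ler_wpM2l t'0 bB)) _.
by rewrite -mulrDl addrC subrK mul1r.
Qed.

End PNorm.

Lemma dotp_continuous (R : realType) (d : nat) (z : 'rV[R]_d) :
  continuous (fun w : 'rV[R]_d => dotp w z).
Proof.
apply: continuous_big => [|j _ w]; first exact: add_continuous.
apply: (continuousM (s := fun v : 'rV[R]_d => v 0 j) (t := fun=> z 0 j)).
  exact: coord_continuous.
exact: cst_continuous.
Qed.

Section Margin.
Variables (R : realType) (d n : nat) (x : 'I_n -> 'rV[R]_d) (y : 'I_n -> R).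
Implicit Types (a b w : 'rV[R]_d).

Definition margin i w := y i * dotp w (x i).

Lemma marginD i a b : margin i (a + b) = margin i a + margin i b.
Proof.
rewrite /margin /dotp -mulrDr -big_split; congr (_ * _).
by apply: eq_bigr => j _; rewrite mxE mulrDl.
Qed.

Lemma marginZ i c a : margin i (c *: a) = c * margin i a.
Proof.
rewrite /margin /dotp mulrCA; congr (_ * _).
by rewrite mulr_sumr; apply: eq_bigr => j _; rewrite mxE mulrA.
Qed.

Lemma margin_continuous i : continuous (margin i).
Proof.
move=> w; apply: (continuousM (s := fun=> y i) (t := fun w => dotp w (x i))).
  exact: cst_continuous.
exact: dotp_continuous.
Qed.

Lemma emp_loss_le_margin (l : R -> R) a b :
  (forall s t, s <= t -> l t <= l s) -> (forall i, margin i a <= margin i b) ->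
  emp_loss l x y b <= emp_loss l x y a.
Proof.
move=> l_nonincr ab; apply: ler_wpM2l; first by rewrite invr_ge0.
by apply: ler_sum => i _; apply: l_nonincr; exact: ab.
Qed.

End Margin.

Lemma mix_parameters (R : realFieldType) (I : finType) (m : I -> R) (N : nat)
    (g delta : R) :
  0 < g -> 0 < delta -> (forall i, 0 < m i -> delta <= m i) ->
  exists t kap eps, [/\ 0 < t <= 1, 0 < eps, eps * 2 ^+ N <= t * g / 2 <= kap,
    forall i, 0 < m i -> 2 * kap + eps <= m i &
    forall i, t * (m i + eps) <= kap].
Proof.
move=> g_gt0 delta_gt0 delta_m.
pose K := delta + g + \sum_i `|m i|.
have K_m i : `|m i| + g <= K.
  have : `|m i| <= \sum_j `|m j| by rewrite (bigD1 i) //= lerDl sumr_ge0.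
  rewrite /K; lra.
have K_ge : delta + g <= K by rewrite /K lerDl sumr_ge0.
pose t := delta / (4 * K); pose eps := t * g / 2 ^+ N.+1.
have K_gt0 : 0 < K by lra.
have t_gt0 : 0 < t by rewrite divr_gt0 // mulr_gt0.
have t_le1 : t <= 1 by rewrite ler_pdivrMr ?mulr_gt0 // mul1r; lra.
have tK : t * K = delta / 4 by rewrite /t; field; rewrite gt_eqF.
have eps_gt0 : 0 < eps by apply: divr_gt0; [exact: mulr_gt0 | exact: exprn_gt0].
have eps_pow : eps * 2 ^+ N = t * g / 2.
  by rewrite /eps exprS; field; rewrite expf_neq0.
have eps_le : eps <= t * g / 2.
  by rewrite -eps_pow ler_peMr ?(ltW eps_gt0) //; apply: exprn_ege1; rewrite ler1n.
have tg_le : t * g / 2 <= t * K by rewrite -mulrA ler_pM2l //; lra.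
have tg_le_g : t * g / 2 <= g / 2 by rewrite ler_pM2r ?invr_gt0 // ler_piMl // ltW.
exists t, (t * K), eps; split => //.
- by rewrite t_gt0 t_le1.
- by rewrite eps_pow lexx tg_le.
- by move=> i m_i; have := delta_m i m_i; lra.
- by move=> i; rewrite ler_pM2l //; have := K_m i; have := ler_norm (m i); lra.
Qed.

Section RegularizationPath.
Variables (R : realType) (d n : nat) (p : R) (x : 'I_n -> 'rV[R]_d) (y : 'I_n -> R).
Variables (l : R -> R) (wbar : R -> 'rV[R]_d) (u : 'rV[R]_d).
Hypothesis p_ge1 : 1 <= p.
Hypothesis l_decr : forall a b, a < b -> l b < l a.
Hypothesis l_convex : convex_fun l.
Hypothesis l_ge0 : forall a, 0 <= l a.
Hypothesis l_inf0 : forall e, 0 < e -> exists a, l a < e.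
Hypothesis separable : linearly_separable x y.
Hypothesis reg_path : is_reg_path p (emp_loss l x y) wbar.
Hypothesis reg_dir : is_reg_direction wbar u.

Local Notation margin := (margin x y).

Lemma margin_reg_path_near e : 0 < e -> \forall B \near +oo, forall i,
  B * (margin i u - e) <= margin i (wbar B) <= B * (margin i u + e).
Proof.
move=> e_gt0.
have close : \forall B \near +oo, forall i,
    `|margin i u - B^-1 * margin i (wbar B)| <= e.
  apply: filter_forall => i.
  have : margin i (B^-1 *: wbar B) @[B --> +oo] --> margin i u.
    by apply: continuous_cvg reg_dir; exact: margin_continuous.
  move=> /cvgrPdist_le /(_ e e_gt0).
  by apply: filterS => B; rewrite /= marginZ.
apply: filterS2 close (nbhs_pinfty_gt (real0 R)) => B close_B B_gt0 i.
move: (close_B i); rewrite distrC ler_distl => /andP[lo hi].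
by rewrite -ler_pdivlMl // lo -ler_pdivrMl.
Qed.

Lemma separable_unit_direction :
  exists wh g, [/\ pnorm p wh <= 1, 0 < g & forall i, g <= margin i wh].
Proof.
have [w0 w0_sep] := separable.
have [g g_gt0 g_le] := finite_pos_lower_bound (fun i => margin i w0).
have P_gt0 : 0 < pnorm p w0 + 1 by rewrite ltr_wpDl ?pnorm_ge0.
exists ((pnorm p w0 + 1)^-1 *: w0), ((pnorm p w0 + 1)^-1 * g); split.
- rewrite pnormZ // ger0_norm; last by rewrite invr_ge0 ltW.
  by rewrite ler_pdivrMl // mulr1 lerDl.
- by rewrite mulr_gt0 ?invr_gt0.
- by move=> i; rewrite marginZ ler_pM2l ?invr_gt0 //; apply/g_le/w0_sep.
Qed.

Section MixedComparison.
Variables (wh : 'rV[R]_d) (g t kap eps : R).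
Hypotheses (wh_le1 : pnorm p wh <= 1) (g_gt0 : 0 < g).
Hypothesis wh_margin : forall i, g <= margin i wh.
Hypotheses (t_gt0 : 0 < t) (t_le1 : t <= 1) (eps_gt0 : 0 < eps).
Hypothesis eps_gain : eps * 2 ^+ n.+1 <= t * g / 2.
Hypothesis kap_pos : forall i, 0 < margin i u -> 2 * kap + eps <= margin i u.
Hypothesis kap_mix : forall i, t * (margin i u + eps) <= kap.
Hypothesis eps_kap : eps * 2 ^+ n.+1 <= kap.

Let eps_le_pow : eps <= eps * 2 ^+ n.+1.
Proof. by rewrite ler_peMr ?(ltW eps_gt0) //; apply: exprn_ege1; rewrite ler1n. Qed.

Let mix_gain B i M : 0 < B -> margin i u <= 0 -> M <= B * (margin i u + eps) ->
  M <= eps * B /\ M + eps * 2 ^+ n.+1 * B <= M + t * (B * margin i wh - M).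
Proof.
move=> B_gt0 u_i M_le.
have M_epsB : M <= eps * B.
  by apply: le_trans M_le _; rewrite mulrC ler_pM2r // gerDr.
split=> //; rewrite lerD2l.
have eps_g : eps <= g / 2.
  apply: le_trans eps_le_pow (le_trans eps_gain _).
  by rewrite -mulrA ler_piMl // divr_ge0 // ltW.
have : B * g <= B * margin i wh by rewrite ler_pM2l.
have : eps * B <= g / 2 * B by rewrite ler_pM2r.
move=> h1 h2; apply: le_trans (_ : t * g / 2 * B <= _).
  by rewrite ler_pM2r.
rewrite -!mulrA ler_pM2l //; lra.
Qed.

Let mix_cost B i M : 0 < B -> 0 < margin i u ->
  B * (margin i u - eps) <= M <= B * (margin i u + eps) ->
  2 * (kap * B) <= M /\ M - kap * B <= M + t * (B * margin i wh - M).
Proof.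
move=> B_gt0 u_i /andP[M_ge M_le]; split.
  apply: le_trans M_ge; rewrite mulrA mulrC ler_pM2l //.
  by have := kap_pos u_i; lra.
have tM : t * M <= kap * B.
  apply: le_trans (ler_wpM2l (ltW t_gt0) M_le) _.
  by rewrite mulrCA [kap * B]mulrC ler_pM2l.
have : 0 <= t * (B * margin i wh).
  apply: mulr_ge0; first exact: ltW.
  apply: mulr_ge0; first exact: ltW.
  exact: le_trans (ltW g_gt0) (wh_margin i).
lra.
Qed.

Lemma reg_path_drop_dominated i0 : margin i0 u <= 0 -> \forall B \near +oo,
  l (eps * B) - l (eps * 2 ^+ n.+1 * B) <= n%:R * (l (kap * B) - l (2 * kap * B)).
Proof.
move=> u_i0.
apply: filterS2 (margin_reg_path_near eps_gt0) (nbhs_pinfty_gt (real0 R)).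
move=> B sandwich B_gt0.
have [wbarB_le wbarB_opt] := reg_path B_gt0.
pose z := t *: (B *: wh) + (1 - t) *: wbar B.
have z_le : pnorm p z <= B.
  have t01 : 0 <= t <= 1 by rewrite (ltW t_gt0) t_le1.
  have Bwh_le : pnorm p (B *: wh) <= B.
    by rewrite pnormZ // gtr0_norm // ler_piMr // ltW.
  by have := pnorm_ball_convex p_ge1 t01 Bwh_le wbarB_le.
have z_margin i :
    margin i z = margin i (wbar B) + t * (B * margin i wh - margin i (wbar B)).
  by rewrite marginD !marginZ; ring.
have kapB_ge0 : 0 <= kap * B.
  rewrite mulr_ge0 ?(ltW B_gt0) //; apply: le_trans eps_kap.
  by rewrite mulr_ge0 ?exprn_ge0 // ltW.
pose X := l (kap * B) - l (2 * kap * B).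
have X_ge0 : 0 <= X.
  by rewrite /X subr_ge0 -mulrA; apply: (loss_nonincr l_decr); rewrite ler_peMl // ler1n.
have gain : l (eps * B) - l (eps * 2 ^+ n.+1 * B) <=
    l (margin i0 (wbar B)) - l (margin i0 z).
  have /andP[_ M_le] := sandwich i0.
  have [M_le' M_s] := mix_gain B_gt0 u_i0 M_le.
  rewrite z_margin; apply: (loss_gain_ge l_decr l_convex _ _ M_le' M_s).
    by rewrite mulr_ge0 ?ltW.
  by rewrite !mulr_ge0 ?exprn_ge0 ?ltW.
have cost i : - X <= l (margin i (wbar B)) - l (margin i z).
  rewrite z_margin; have [u_i | u_i] := lerP (margin i u) 0.
    have /andP[_ M_le] := sandwich i.
    have [_ M_s] := mix_gain B_gt0 u_i M_le.
    apply: le_trans (_ : - X <= 0) _; first by rewrite oppr_le0.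
    rewrite subr_ge0; apply: (loss_nonincr l_decr (le_trans _ M_s)).
    by rewrite lerDl !mulr_ge0 ?exprn_ge0 ?ltW.
  have [M_ge M_s] := mix_cost B_gt0 u_i (sandwich i).
  have := loss_cost_le l_decr l_convex kapB_ge0 M_ge M_s.
  by rewrite /X -[2 * kap * B]mulrA lerNl opprB.
have n_gt0 : (0 < n)%N := leq_ltn_trans (leq0n i0) (ltn_ord i0).
have opt : \sum_i l (margin i (wbar B)) <= \sum_i l (margin i z).
  by have := wbarB_opt z z_le; rewrite /emp_loss ler_pM2l ?invr_gt0 ?ltr0n.
have := sumr_ge_sub_card X_ge0 cost gain; rewrite card_ord => sum_ge.
by rewrite -subr_le0 (le_trans sum_ge) // sumrB subr_le0.
Qed.

End MixedComparison.

Lemma reg_direction_margin_gt0 i : 0 < margin i u.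
Proof.
rewrite ltNge; apply/negP => u_i.
have [wh [g [wh_le1 g_gt0 wh_margin]]] := separable_unit_direction.
have [delta delta_gt0 delta_margin] := finite_pos_lower_bound (fun j => margin j u).
have [t [kap [eps [/andP[t_gt0 t_le1] eps_gt0 /andP[eps_gain gain_kap] kap_pos kap_mix]]]]
  := mix_parameters n.+1 g_gt0 delta_gt0 delta_margin.
have eps_kap := le_trans eps_gain gain_kap.
apply: (loss_drop_not_dominated l_decr l_ge0 l_inf0 eps_gt0 eps_kap).
exact: (reg_path_drop_dominated wh_le1 g_gt0 wh_margin t_gt0 t_le1 eps_gt0
  eps_gain kap_pos kap_mix eps_kap u_i).
Qed.

Lemma margin_reg_path_le_direction alpha : 0 < alpha -> \forall B \near +oo,
  forall i, margin i (wbar B) <= margin i (((1 + alpha) * B) *: u).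
Proof.
move=> alpha_gt0.
have [gam gam_gt0 gam_le] := finite_pos_lower_bound (fun i => margin i u).
apply: filterS2 (margin_reg_path_near (mulr_gt0 alpha_gt0 gam_gt0))
  (nbhs_pinfty_gt (real0 R)) => B sandwich B_gt0 i.
have /andP[_ M_le] := sandwich i.
apply: le_trans M_le _.
rewrite marginZ -mulrA [_ * (B * _)]mulrCA ler_pM2l // mulrDl mul1r lerD2l ler_pM2l //.
exact/gam_le/reg_direction_margin_gt0.
Qed.

End RegularizationPath.

Theorem lemma4 (R : realType) (d n : nat) (p q C : R)
  (x : 'I_n -> 'rV[R]_d) (y : 'I_n -> R) (l : R -> R)
  (wbar : R -> 'rV[R]_d) (u : 'rV[R]_d) :
  1 < p -> p^-1 + q^-1 = 1 ->
  (0 < n)%N ->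
  (forall i, y i = 1 \/ y i = -1) ->
  linearly_separable x y ->
  (forall i, pnorm q (x i) < C) ->
  (forall a b : R, a < b -> l b < l a) ->
  convex_fun l ->
  (forall a : R, exists b : R, l b < l a) ->
  (forall a : R, 0 <= l a) ->
  (forall e : R, 0 < e -> exists a : R, l a < e) ->
  is_reg_path p (emp_loss l x y) wbar ->
  is_reg_direction wbar u ->
  forall alpha : R, 0 < alpha ->
  exists r : R, forall w : 'rV[R]_d, r < pnorm p w ->
    emp_loss l x y (((1 + alpha) * pnorm p w) *: u) <= emp_loss l x y w.
Proof.
move=> p_gt1 _ _ _ separable _ l_decr l_convex _ l_ge0 l_inf0 reg_path reg_dir.
move=> alpha alpha_gt0.
have [B0 [_ dominated]] := margin_reg_path_le_direction (ltW p_gt1) l_decr l_convex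
  l_ge0 l_inf0 separable reg_path reg_dir alpha_gt0.
exists (Num.max B0 0) => w; rewrite gt_max => /andP[B0_lt w_gt0].
apply: le_trans ((reg_path _ w_gt0).2 w (lexx _)).
apply: emp_loss_le_margin (dominated _ B0_lt) => a b.
exact: (loss_nonincr l_decr).
Qed.
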